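(* Let $I\ge1$ and $B\ge1$ be integers. For real weights $b_{-B},\dots,b_B$ call the $I\times I$ matrix $\mathbf{B}$ defined by $(\mathbf{B}\mathbf{f})_i=\sum_{j=-B}^{B}b_j\,\mathrm{f}_{i+j}$ (indices taken periodically modulo $I$) a periodic convolution matrix; call it zero-sum if $\sum_{j=-B}^{B}b_j=0$ (e.g. when $b_j=\tilde b_j-\frac{1}{2B+1}\sum_{k=-B}^B\tilde b_k$ for arbitrary $\tilde b$). For $m=1,2,3$ let $$\mathcal{B}_m=\begin{bmatrix}\mathbf{B}_m^{11}&\mathbf{B}_m^{12}\\ \mathbf{B}_m^{21}&\mathbf{B}_m^{22}\end{bmatrix}\in\mathbb{R}^{2I\times2I},$$ where each $\mathbf{B}_m^{jl}$ is a periodic convolution matrix and $\mathbf{B}_m^{11},\mathbf{B}_m^{21}$ are zero-sum, for $m=1,2,3$. Let $\boldsymbol{\Omega}\in\mathbb{R}^{I\times I}$ be diagonal with positive entries, $\boldsymbol{\Omega}_2=\mathrm{diag}(\boldsymbol{\Omega},\boldsymbol{\Omega})$, and let $f_H:\mathbb{R}^I\to\mathbb{R}^I$ satisfy $\mathbf{1}_I^T\boldsymbol{\Omega}f_H(\bar{\mathbf{u}})=0$ for all $\bar{\mathbf{u}}$. Let $\mathbf{k}(\mathbf{a}),\mathbf{q}(\mathbf{a})\in\mathbb{R}^{2I\times 2I}$ be arbitrary diagonal matrices depending on $\mathbf{a}$. For $\mathbf{a}=(\bar{\mathbf{u}},\mathbf{s})\in\mathbb{R}^{2I}$ set $$\mathcal{G}(\mathbf{a})=\begin{bmatrix}f_H(\bar{\mathbf{u}})\\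 \mathbf{0}\end{bmatrix}+\boldsymbol{\Omega}_2^{-1}\big(\mathcal{B}_2^T\mathbf{k}(\mathbf{a})\mathcal{B}_3-\mathcal{B}_3^T\mathbf{k}(\mathbf{a})\mathcal{B}_2\big)\mathbf{a}-\boldsymbol{\Omega}_2^{-1}\mathcal{B}_1^T\mathbf{q}(\mathbf{a})^2\mathcal{B}_1\mathbf{a}.$$ Then for every $\mathbf{a}$, $\begin{bmatrix}\mathbf{1}_I\\ \mathbf{0}\end{bmatrix}^T\boldsymbol{\Omega}_2\,\mathcal{G}(\mathbf{a})=0$; consequently along any solution of $\frac{d\mathbf{a}}{dt}=\mathcal{G}(\mathbf{a})$ the discrete momentum $\mathbf{1}_I^T\boldsymbol{\Omega}\bar{\mathbf{u}}$ is constant in time, for all values of the weights and of $\mathbf{k},\mathbf{q}$.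
   Context: This is the structure-preserving closure model with periodic boundary conditions: $\bar{\mathbf{u}}$ is the coarse-grid filtered solution, $\mathbf{s}$ auxiliary subgrid-scale variables, $f_H$ a momentum-conserving coarse-grid discretization, and $\mathbf{k},\mathbf{q}$ are diagonal fields produced by a neural network. $\mathbf{1}_I$ is the all-ones vector in $\mathbb{R}^I$. *)

From HB Require Import structures.
From mathcomp Require Import all_boot all_order all_algebra.
From mathcomp Require Import all_classical all_reals all_analysis.
Set Implicit Arguments. Unset Strict Implicit. Unset Printing Implicit Defensive.
Import Order.TTheory GRing.Theory Num.Theory.
Local Open Scope ring_scope.

(* The weight b_j (j = -Bw..Bw) is stored as [b k] with k : 'I_(2Bw+1), j = k - Bw.
   (B f)_i = \sum_j b_j f_{(i+j) mod I}; hence the (i,l) entry is the sum of the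
   b_j with (i + j) mod I = l. *)
Definition pconv_mx (R : ringType) (I Bw : nat) (b : 'I_(Bw.*2.+1) -> R) : 'M[R]_I :=
  \matrix_(i < I, l < I)
    \sum_(k < Bw.*2.+1 | ((i%:Z + (k%:Z - Bw%:Z)) %% I%:Z)%Z == l%:Z) b k.

Definition zero_sum (R : ringType) (Bw : nat) (b : 'I_(Bw.*2.+1) -> R) : Prop :=
  \sum_(k < Bw.*2.+1) b k = 0.

Definition pconv_block (R : ringType) (I Bw : nat)
  (b : 'I_2 -> 'I_2 -> 'I_(Bw.*2.+1) -> R) : 'M[R]_(I + I) :=
  block_mx (pconv_mx I (b 0 0)) (pconv_mx I (b 0 1))
           (pconv_mx I (b 1 0)) (pconv_mx I (b 1 1)).

Definition Omega_mx (R : ringType) (I : nat) (w : 'I_I -> R) : 'M[R]_I :=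
  diag_mx (\row_i w i).
Definition Omega2_mx (R : ringType) (I : nat) (w : 'I_I -> R) : 'M[R]_(I + I) :=
  block_mx (Omega_mx w) 0 0 (Omega_mx w).

Definition closure_rhs (R : fieldType) (I Bw : nat)
  (b : 'I_3 -> 'I_2 -> 'I_2 -> 'I_(Bw.*2.+1) -> R) (w : 'I_I -> R)
  (fH : 'cV[R]_I -> 'cV[R]_I) (k q : 'cV[R]_(I + I) -> 'M[R]_(I + I))
  (a : 'cV[R]_(I + I)) : 'cV[R]_(I + I) :=
  let B1 := pconv_block I (b 0) in
  let B2 := pconv_block I (b 1) in
  let B3 := pconv_block I (b 2) in
  let Om2inv := invmx (Omega2_mx w) in
  col_mx (fH (usubmx a)) 0
  + Om2inv *m ((B2^T *m k a *m B3 - B3^T *m k a *m B2) *m a)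
  - Om2inv *m (B1^T *m (q a *m q a) *m B1 *m a).

Definition momentum (R : ringType) (I : nat) (w : 'I_I -> R) (a : 'cV[R]_(I + I)) : 'M[R]_1 :=
  (const_mx 1 : 'cV[R]_I)^T *m Omega_mx w *m usubmx a.

From HB Require Import structures.
From mathcomp Require Import all_boot all_order all_algebra.
From mathcomp Require Import all_classical all_reals all_analysis.
Import Order.TTheory GRing.Theory Num.Theory.
Local Open Scope ring_scope.

(* Every row of a periodic convolution matrix carries each weight exactly once,
   so zero-sum weights make it annihilate the constant vector.  Hence each
   block matrix B_m kills (1; 0), and in the pairing of (1; 0)^T Omega_2 with
   G(a) the factor Omega_2 cancels Omega_2^-1, every closure term becomes
   (B_m (1; 0))^T (...) = 0, and only 1^T Omega f_H(u) = 0 remains.  Since the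
   momentum is the linear functional (1; 0)^T Omega_2, its time derivative is
   exactly this pairing. *)

Lemma pconv_mx_ones (R : ringType) (I Bw : nat) (b : 'I_(Bw.*2.+1) -> R) :
  pconv_mx I b *m (const_mx 1 : 'cV[R]_I) = const_mx (\sum_k b k).
Proof.
apply/matrixP => i j; rewrite !mxE.
under eq_bigr do rewrite !mxE mulr1.
rewrite (exchange_big_dep xpredT) //=; apply: eq_bigr => k _.
set z := ((i%:Z + (k%:Z - Bw%:Z)) %% I%:Z)%Z.
have I_gt0 : (0 < I)%N by case: I i {z} => [[]|].
have z_ge0 : (0 <= z)%R by rewrite modz_ge0 // eqz_nat -lt0n.
have z_ltI : (absz z < I)%N by rewrite -ltz_nat gez0_abs // ltz_pmod.
rewrite (bigD1 (Ordinal z_ltI)) /=; last by rewrite gez0_abs.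
rewrite big1 ?addr0 // => l /andP[/eqP zl /eqP[]].
by apply: val_inj; rewrite /= zl.
Qed.

Lemma pconv_mx_ones_zero_sum (R : ringType) (I Bw : nat) (b : 'I_(Bw.*2.+1) -> R) :
  zero_sum b -> pconv_mx I b *m (const_mx 1 : 'cV[R]_I) = 0.
Proof. by rewrite pconv_mx_ones => ->. Qed.

Lemma pconv_block_ones0 (R : ringType) (I Bw : nat)
    (b : 'I_2 -> 'I_2 -> 'I_(Bw.*2.+1) -> R) :
  zero_sum (b 0 0) -> zero_sum (b 1 0) ->
  pconv_block I b *m col_mx (const_mx 1 : 'cV[R]_I) 0 = 0.
Proof.
move=> zs00 zs10; rewrite mul_block_col !mulmx0 !addr0.
by rewrite !pconv_mx_ones_zero_sum // col_mx0.
Qed.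

Section Omega.

Variables (R : fieldType) (I : nat) (w : 'I_I -> R).

Lemma Omega2_mx_unit : (forall i, w i != 0) -> Omega2_mx w \in unitmx.
Proof.
move=> w_neq0; rewrite unitmxE det_ublock det_diag unitfE.
by rewrite mulf_neq0 // prodf_seq_neq0; apply/allP => i _; rewrite mxE w_neq0.
Qed.

Lemma Omega2_mx_col_mx0 (c : 'cV[R]_I) (X : 'cV[R]_(I + I)) :
  (col_mx c 0)^T *m Omega2_mx w *m X = c^T *m Omega_mx w *m usubmx X.
Proof.
rewrite tr_col_mx mul_row_block trmx0 !mul0mx !mulmx0 !addr0.
by rewrite -{1}(vsubmxK X) mul_row_col mul0mx addr0.
Qed.

End Omega.

Lemma closure_rhs_momentum {R : fieldType} {I Bw : nat}
    (b : 'I_3 -> 'I_2 -> 'I_2 -> 'I_(Bw.*2.+1) -> R)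
    (w : 'I_I -> R) (fH : 'cV[R]_I -> 'cV[R]_I)
    (k q : 'cV[R]_(I + I) -> 'M[R]_(I + I)) (a : 'cV[R]_(I + I)) :
  (forall m, zero_sum (b m 0 0) /\ zero_sum (b m 1 0)) ->
  (forall i, w i != 0) ->
  (forall u, (const_mx 1 : 'cV[R]_I)^T *m Omega_mx w *m fH u = 0) ->
  (col_mx (const_mx 1 : 'cV[R]_I) 0)^T *m Omega2_mx w
    *m closure_rhs b w fH k q a = 0.
Proof.
move=> zs w_neq0 fH_momentum; set v := col_mx _ _.
have vB m : v^T *m (pconv_block I (b m))^T = 0.
  by case: (zs m) => ? ?; rewrite -trmx_mul pconv_block_ones0 ?trmx0.
rewrite !(mulmxDr, mulmxN) Omega2_mx_col_mx0 col_mxKu fH_momentum add0r.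
rewrite !mulmxBl !mulmxBr !mulmxA !mulmxK ?Omega2_mx_unit //.
by rewrite !vB !mul0mx subrr oppr0 addr0.
Qed.

Section LinearFunctional.

Context {R : realType} {n : nat} (c : 'rV[R]_n).

Lemma is_derive_mulmx (a : R -> 'cV[R]_n) (da : 'cV[R]_n) (t : R) :
  (forall i, is_derive t 1 (fun s => a s i ord0) (da i ord0)) ->
  is_derive t 1 (fun s => (c *m a s) 0 0) ((c *m da) 0 0).
Proof.
move=> a_derive.
have -> : (fun s => (c *m a s) 0 0) = \sum_j c 0 j \*: (fun s => a s j ord0).
  by apply: funext => s; rewrite fct_sumE mxE.
rewrite mxE; exact: is_derive_sum (fun j => is_deriveZ (c 0 j) (a_derive j)).
Qed.

Lemma mulmx_const_along_flow {a : R -> 'cV[R]_n} {G : 'cV[R]_n -> 'cV[R]_n} :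
  (forall (t : R) i, is_derive t 1 (fun s => a s i ord0) (G (a t) i ord0)) ->
  (forall x, c *m G x = 0) ->
  forall t1 t2, c *m a t1 = c *m a t2.
Proof.
move=> a_derive c_G t1 t2; apply/matrixP => i j; rewrite !ord1.
apply: (is_derive_0_is_cst (f := fun s => (c *m a s) 0 0)) => t.
by move: (a_derive t) => /is_derive_mulmx; rewrite c_G mxE.
Qed.

End LinearFunctional.

Theorem mainTheorem3 (R : realType) (I Bw : nat) (hI : (0 < I)%N) (hB : (0 < Bw)%N)
  (b : 'I_3 -> 'I_2 -> 'I_2 -> 'I_(Bw.*2.+1) -> R)
  (hzs : forall m : 'I_3, zero_sum (b m 0 0) /\ zero_sum (b m 1 0))
  (w : 'I_I -> R) (hw : forall i, 0 < w i)
  (fH : 'cV[R]_I -> 'cV[R]_I)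
  (hfH : forall u, (const_mx 1 : 'cV[R]_I)^T *m Omega_mx w *m fH u = 0)
  (k q : 'cV[R]_(I + I) -> 'M[R]_(I + I))
  (hk : forall a, is_diag_mx (k a)) (hq : forall a, is_diag_mx (q a)) :
  (forall a : 'cV[R]_(I + I),
     (col_mx (const_mx 1 : 'cV[R]_I) (0 : 'cV[R]_I))^T *m Omega2_mx w
       *m closure_rhs b w fH k q a = 0)
  /\
  (forall a : R -> 'cV[R]_(I + I),
     (forall (t : R) (i : 'I_(I + I)),
        is_derive t 1 (fun s => a s i ord0) (closure_rhs b w fH k q (a t) i ord0)) ->
     forall t1 t2 : R, momentum w (a t1) = momentum w (a t2)).
Proof.
have w_neq0 i : w i != 0 by rewrite gt_eqF.
have rate a := closure_rhs_momentum b w fH k q a hzs w_neq0 hfH.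
split=> // a a_derive t1 t2.
rewrite /momentum -!Omega2_mx_col_mx0.
exact: mulmx_const_along_flow _ a_derive rate t1 t2.
Qed.
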